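(* Let $k\ge 2$ and $\mathcal{M}=\{M_1,\dots,M_k\}\subseteq\mathbb{S}^n$. Suppose that for all distinct indices $i,j\in\{1,\dots,k\}$ there exists $(\alpha,\beta)\neq(0,0)$ such that $\alpha M_i+\beta M_j$ is positive semidefinite. Then $\mathcal{S}(\mathcal{M})=\{X\in\mathbb{S}^n_+:\langle M_i,X\rangle\ge 0\ \forall i\in\{1,\dots,k\}\}$ is rank-one generated.
   Context: $\mathbb{S}^n$ is the space of real symmetric $n\times n$ matrices with $\langle A,B\rangle=\mathrm{tr}(AB)$, and $\mathbb{S}^n_+$ the PSD cone. A closed convex cone $\mathcal{S}\subseteq\mathbb{S}^n_+$ is rank-one generated (ROG) if $\mathcal{S}=\mathrm{conv}(\mathcal{S}\cap\{xx^\top:x\in\mathbb{R}^n\})$. *)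

From HB Require Import structures.
From mathcomp Require Import all_boot all_order all_algebra.
From mathcomp Require Import reals.
Set Implicit Arguments. Unset Strict Implicit. Unset Printing Implicit Defensive.
Import Order.TTheory GRing.Theory Num.Theory.
Local Open Scope ring_scope.

Section Defs.
Variables (R : realType) (n : nat).

Definition symmat (A : 'M[R]_n) : Prop := A^T = A.

Definition frob (A B : 'M[R]_n) : R := \tr (A *m B).

Definition psd (A : 'M[R]_n) : Prop :=
  symmat A /\ forall x : 'cV[R]_n, 0 <= (x^T *m A *m x) 0 0.

Definition rank_one_psd (X : 'M[R]_n) : Prop :=
  exists x : 'cV[R]_n, X = x *m x^T.

Definition conv (S : 'M[R]_n -> Prop) (X : 'M[R]_n) : Prop :=
  exists (m : nat) (w : 'I_m -> R) (A : 'I_m -> 'M[R]_n),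
    (forall i, 0 <= w i) /\ \sum_(i < m) w i = 1 /\
    (forall i, S (A i)) /\ X = \sum_(i < m) w i *: A i.

Definition ROG (S : 'M[R]_n -> Prop) : Prop :=
  forall X, S X <-> conv (fun Y => S Y /\ rank_one_psd Y) X.

Definition SM (k : nat) (M : 'I_k -> 'M[R]_n) (X : 'M[R]_n) : Prop :=
  psd X /\ forall i, 0 <= frob (M i) X.

End Defs.

From HB Require Import structures.
From mathcomp Require Import all_boot all_order all_algebra.
From mathcomp Require Import reals.
From mathcomp.algebra_tactics Require Import ring lra.
From Stdlib Require Import Classical.
Import Order.TTheory GRing.Theory Num.Theory.
Local Open Scope ring_scope.

Set Implicit Arguments. Unset Strict Implicit. Unset Printing Implicit Defensive.

(* Every X in S^n_+ is a sum of dyads v v^T, and if some decomposition of X uses only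
   admissible vectors (v^T M_i v >= 0 for all i) then X is a convex combination of rank-one
   elements of S(M); so the task is to repair a decomposition of a feasible X.

   A pair with a psd combination a M_i + b M_j is either definite (a and b of the same sign)
   or makes one constraint redundant: it follows from the other one on every vector, or its
   matrix is negative semidefinite, and then feasibility forces it to vanish on every piece.
   Redundant constraints are dropped one at a time.

   If all pairs are definite, a vector y in a decomposition of X that is isotropic for one
   M_a is admissible: if a M_a + b M_j is psd then b y^T M_j y >= 0, and if it is nsd then
   feasibility makes <a M_a + b M_j, X> = 0, so it vanishes on every piece. An inadmissible
   piece u with u^T M_a u < 0 has a partner w with w^T M_a w > 0 (X is feasible), and a
   rotation of (u, w) produces an M_a-isotropic piece y. Peeling off the largest multiple of
   y y^T keeping X feasible either shortens the decomposition or makes some constraint tight,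
   and a tight constraint is handled at once by rotating until every piece is isotropic for
   it (Sturm-Zhang). *)

Lemma lin_eq0_of_quad_ge0 (R : realFieldType) (b c : R) :
  (forall t, 0 <= t * b + t ^+ 2 * c) -> b = 0.
Proof.
move=> h.
have c_ge0 : 0 <= c by have := h 1; have := h (-1); rewrite sqrrN expr1n; lra.
have c1_gt0 : 0 < c + 1 by lra.
have := h (- b / (c + 1)).
have -> : - b / (c + 1) * b + (- b / (c + 1)) ^+ 2 * c = - (b / (c + 1)) ^+ 2.
  by field; rewrite gt_eqF.
rewrite oppr_ge0 => hb.
have : (b / (c + 1)) ^+ 2 = 0 by apply/eqP; rewrite eq_le hb sqr_ge0.
by move/eqP; rewrite sqrf_eq0 mulf_eq0 invr_eq0 (gt_eqF c1_gt0) orbF => /eqP.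
Qed.

Lemma binary_quadratic_unit_root (R : rcfType) (p q r : R) :
  p <= 0 -> 0 < r ->
  exists a b : R, a ^+ 2 + b ^+ 2 = 1 /\ a ^+ 2 * p + a * b * q + b ^+ 2 * r = 0.
Proof.
move=> p_le0 r_gt0.
pose D := q ^+ 2 - 4 * p * r.
have D_ge0 : 0 <= D by rewrite /D; nra.
pose t := (- q + Num.sqrt D) / (2 * r).
have root_t : p + t * q + t ^+ 2 * r = 0.
  have -> : p + t * q + t ^+ 2 * r = (4 * p * r - q ^+ 2 + Num.sqrt D ^+ 2) / (4 * r).
    by rewrite /t; field; rewrite gt_eqF.
  by rewrite sqr_sqrtr // /D; field; rewrite gt_eqF.
pose s := Num.sqrt (1 + t ^+ 2).
have s2 : s ^+ 2 = 1 + t ^+ 2 by rewrite sqr_sqrtr // addr_ge0 ?sqr_ge0.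
have s_neq0 : s != 0 by rewrite -sqrf_eq0 s2 gt_eqF // ltr_pwDl ?sqr_ge0.
exists s^-1, (t / s); split.
  have -> : s^-1 ^+ 2 + (t / s) ^+ 2 = (1 + t ^+ 2) / s ^+ 2 by field.
  by rewrite -s2 divff // expf_neq0.
have -> : s^-1 ^+ 2 * p + s^-1 * (t / s) * q + (t / s) ^+ 2 * r =
          (p + t * q + t ^+ 2 * r) / s ^+ 2 by field.
by rewrite root_t mul0r.
Qed.

Lemma exists_critical_scaling (R : realFieldType) (I : finType) (P : pred I)
    (f g : I -> R) :
  (forall j, P j -> 0 <= f j) -> (exists2 j, P j & f j < g j) ->
  exists l : R, [/\ 0 <= l < 1, forall j, P j -> l * g j <= f j
                  & exists2 j, P j & l * g j = f j].
Proof.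
move=> f_ge0 [j0 Pj0 fg0].
have gj0_gt0 : 0 < g j0 by apply: le_lt_trans (f_ge0 _ Pj0) fg0.
pose Q := [pred j | P j && (0 < g j)].
have Qj0 : Q j0 by rewrite /= Pj0 gj0_gt0.
case: (@arg_minP _ _ _ _ Q (fun j => f j / g j) Qj0) => j /andP [Pj gj_gt0] jmin.
exists (f j / g j); split.
- rewrite divr_ge0 ?f_ge0 ?ltW //=.
  by apply: le_lt_trans (jmin _ Qj0) _; rewrite ltr_pdivrMr // mul1r.
- move=> i Pi; have [gi_gt0|gi_le0] := ltP 0 (g i).
    by rewrite -ler_pdivlMr //; apply: jmin; rewrite /= Pi gi_gt0.
  apply: le_trans (f_ge0 _ Pi); apply: mulr_ge0_le0 => //.
  by rewrite divr_ge0 ?f_ge0 ?ltW.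
- by exists j => //; rewrite divfK // gt_eqF.
Qed.

Lemma sum_ge0_has_gt0 (R : realDomainType) (T : eqType) (L : seq T)
    (f : T -> R) u :
  0 <= \sum_(v <- L) f v -> u \in L -> f u < 0 -> exists2 w, w \in L & 0 < f w.
Proof.
move=> sum_ge0 uL fu_lt0; apply/hasP; apply: contraTT sum_ge0 => /hasPn f_le0.
have : \sum_(v <- rem u L) f v <= 0.
  by rewrite big_seq sumr_le0 // => v /mem_rem /f_le0; rewrite -leNgt.
have -> : \sum_(v <- L) f v = f u + \sum_(v <- rem u L) f v by rewrite (big_rem u).
rewrite -ltNge; lra.
Qed.

Section Forms.
Variables (R : comNzRingType) (n : nat).
Implicit Types (A B : 'M[R]_n) (u v w x : 'cV[R]_n) (L : seq 'cV[R]_n).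

Definition bilform A u v : R := (u^T *m A *m v) 0 0.
Definition qform A v : R := bilform A v v.
Definition dyad v : 'M[R]_n := v *m v^T.
Definition dyadsum L : 'M[R]_n := \sum_(v <- L) dyad v.

Lemma bilform_sym A u v : A^T = A -> bilform A u v = bilform A v u.
Proof.
move=> A_sym; rewrite /bilform -[in LHS](trmxK (u^T *m A *m v)) [in LHS]mxE.
by rewrite !trmx_mul trmxK A_sym mulmxA.
Qed.

Lemma qformDl A B v : qform (A + B) v = qform A v + qform B v.
Proof. by rewrite /qform /bilform mulmxDr mulmxDl mxE. Qed.

Lemma qformNl A v : qform (- A) v = - qform A v.
Proof. by rewrite /qform /bilform mulmxN mulNmx mxE. Qed.

Lemma qformZl a A v : qform (a *: A) v = a * qform A v.
Proof. by rewrite /qform /bilform -scalemxAr -scalemxAl mxE. Qed.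

Lemma qformZr A c v : qform A (c *: v) = c ^+ 2 * qform A v.
Proof.
by rewrite /qform /bilform !linearZ /= -!scalemxAl !mxE; ring.
Qed.

Lemma qform_comb A a b u w :
  qform A (a *: u + b *: w) =
  a ^+ 2 * qform A u + a * b * (bilform A u w + bilform A w u) + b ^+ 2 * qform A w.
Proof.
rewrite /qform /bilform !linearD !linearZ /= !(mulmxDl, mulmxDr).
by rewrite -!scalemxAl !mxE; ring.
Qed.

Lemma qform_dyad u x : qform (dyad u) x = ((x^T *m u) 0 0) ^+ 2.
Proof.
rewrite /qform /bilform /dyad !mulmxA -(mulmxA (x^T *m u)) mxE big_ord1 expr2.
by rewrite -[in X in _ * X](trmxK (u^T *m x)) [in X in _ * X]mxE trmx_mul trmxK.
Qed.

Lemma dyad_tr v : (dyad v)^T = dyad v.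
Proof. by rewrite /dyad trmx_mul trmxK. Qed.

Lemma dyadZ c v : dyad (c *: v) = c ^+ 2 *: dyad v.
Proof. by rewrite /dyad linearZ /= -scalemxAl -scalemxAr scalerA -expr2. Qed.

Lemma dyad_rotation a b u w : a ^+ 2 + b ^+ 2 = 1 ->
  dyad (a *: u + b *: w) + dyad ((- b) *: u + a *: w) = dyad u + dyad w.
Proof.
move=> ab1; apply/matrixP => i j; rewrite /dyad !mxE !big_ord1 !mxE.
rewrite -[u i 0 * u j 0 + _]mul1r -ab1; ring.
Qed.

Lemma mxtrace_mul_dyad A v : \tr (A *m dyad v) = qform A v.
Proof. by rewrite /dyad mulmxA mxtrace_mulC mulmxA trace_mx11. Qed.

Lemma sum_qform_dyadsum A L : \sum_(v <- L) qform A v = \tr (A *m dyadsum L).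
Proof.
rewrite /dyadsum mulmx_sumr raddf_sum; apply: eq_bigr => v _.
exact/esym/mxtrace_mul_dyad.
Qed.

Lemma dyadsum_cons v L : dyadsum (v :: L) = dyad v + dyadsum L.
Proof. exact: big_cons. Qed.

Lemma dyadsum_rem u L : u \in L -> dyadsum L = dyad u + dyadsum (rem u L).
Proof. by move=> uL; rewrite /dyadsum (big_rem u). Qed.

Lemma bilform_deltal A i v :
  bilform A (delta_mx i 0) v = (A *m v) i 0.
Proof. by rewrite /bilform trmx_delta -mulmxA -rowE mxE. Qed.

Lemma qform_delta A i :
  qform A (delta_mx i 0) = A i i.
Proof. by rewrite /qform bilform_deltal -colE mxE. Qed.

End Forms.

Section Isotropic.
Variables (R : rcfType) (n : nat).
Implicit Types (A : 'M[R]_n) (u v w y : 'cV[R]_n) (L : seq 'cV[R]_n).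

Lemma isotropic_split A L u w :
  u \in L -> w \in L -> qform A u < 0 -> 0 < qform A w ->
  exists y L1, [/\ dyadsum (y :: L1) = dyadsum L, (size L1 < size L)%N & qform A y = 0].
Proof.
move=> uL wL qAu_lt0 qAw_gt0.
have [a [b [ab1 qAy0]]] :=
  binary_quadratic_unit_root (bilform A u w + bilform A w u) (ltW qAu_lt0) qAw_gt0.
have wLu : w \in rem u L.
  by apply: rem_mem wL; apply: contraTneq qAw_gt0 => ->; rewrite -leNgt ltW.
exists (a *: u + b *: w), ((- b) *: u + a *: w :: rem w (rem u L)); split.
- by rewrite !dyadsum_cons addrA dyad_rotation // (dyadsum_rem uL) (dyadsum_rem wLu) addrA.
- by rewrite (perm_size (perm_to_rem uL)) /= (perm_size (perm_to_rem wLu)).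
- by rewrite qform_comb.
Qed.

Lemma isotropic_decomposition A L : \sum_(v <- L) qform A v = 0 ->
  exists2 L', dyadsum L' = dyadsum L & forall y, y \in L' -> qform A y = 0.
Proof.
have [N] := ubnP (size L); elim: N L => // N IH L /ltnSE size_L sum0.
have [iso|] := boolP (all (fun v => qform A v == 0) L).
  by exists L => // y yL; apply/eqP; move/allP: iso; apply.
case/allPn => v vL; rewrite neq_lt => /orP qAv.
have [u [w [uL wL qAu qAw]]] :
    exists u w, [/\ u \in L, w \in L, qform A u < 0 & 0 < qform A w].
  case: qAv => [qAv_lt0|qAv_gt0].
    have sum_ge0 : 0 <= \sum_(v <- L) qform A v by rewrite sum0.
    have [w wL qAw] := sum_ge0_has_gt0 sum_ge0 vL qAv_lt0.
    by exists v, w.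
  have sumN_ge0 : 0 <= \sum_(v <- L) - qform A v by rewrite sumrN sum0 oppr0.
  have qAv_neg : - qform A v < 0 by rewrite oppr_lt0.
  have [u uL] := sum_ge0_has_gt0 sumN_ge0 vL qAv_neg.
  by rewrite oppr_gt0 => qAu; exists u, v.
have [y [L1 [eL1 size_L1 qAy]]] := isotropic_split uL wL qAu qAw.
have [|L' eL' iso] := IH L1 (leq_trans size_L1 size_L).
  by move: sum0; rewrite sum_qform_dyadsum -eL1 -sum_qform_dyadsum big_cons qAy add0r.
exists (y :: L'); first by rewrite dyadsum_cons eL' -dyadsum_cons.
by move=> z; rewrite inE => /predU1P [->|/iso].
Qed.

End Isotropic.

Section PSD.
Variables (R : realType) (n : nat).
Implicit Types (A B P X Y : 'M[R]_n) (u v w x y : 'cV[R]_n) (L : seq 'cV[R]_n).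

Lemma frobDr A X Y : frob A (X + Y) = frob A X + frob A Y.
Proof. by rewrite /frob mulmxDr mxtraceD. Qed.

Lemma frobZr A c X : frob A (c *: X) = c * frob A X.
Proof. by rewrite /frob -scalemxAr mxtraceZ. Qed.

Lemma frob0r A : frob A 0 = 0.
Proof. by rewrite /frob mulmx0 mxtrace0. Qed.

Lemma frobDl A B X : frob (A + B) X = frob A X + frob B X.
Proof. by rewrite /frob mulmxDl mxtraceD. Qed.

Lemma frobNl A X : frob (- A) X = - frob A X.
Proof. by rewrite /frob mulNmx raddfN. Qed.

Lemma frobZl c A X : frob (c *: A) X = c * frob A X.
Proof. by rewrite /frob -scalemxAl mxtraceZ. Qed.

Lemma frob_dyadsum A L : frob A (dyadsum L) = \sum_(v <- L) qform A v.
Proof. by rewrite sum_qform_dyadsum. Qed.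

Lemma frob_dyad A v : frob A (dyad v) = qform A v.
Proof. exact: mxtrace_mul_dyad. Qed.

Lemma psd0 : psd (0 : 'M[R]_n).
Proof. by split=> [|x]; rewrite ?/symmat ?trmx0 // mulmx0 mul0mx mxE. Qed.

Lemma psdD P Y : psd P -> psd Y -> psd (P + Y).
Proof.
move=> [P_sym P_ge0] [Y_sym Y_ge0]; split; first by rewrite /symmat linearD /= P_sym Y_sym.
by move=> x; change (0 <= qform (P + Y) x); rewrite qformDl addr_ge0 ?P_ge0 ?Y_ge0.
Qed.

Lemma psdZ c P : 0 <= c -> psd P -> psd (c *: P).
Proof.
move=> c_ge0 [P_sym P_ge0]; split; first by rewrite /symmat linearZ /= P_sym.
by move=> x; change (0 <= qform (c *: P) x); rewrite qformZl mulr_ge0 ?P_ge0.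
Qed.

Lemma psd_dyad v : psd (dyad v).
Proof.
split=> [|x]; first exact: dyad_tr.
by change (0 <= qform (dyad v) x); rewrite qform_dyad sqr_ge0.
Qed.

Lemma psd_frob_dyadsum_ge0 P L : psd P -> 0 <= frob P (dyadsum L).
Proof. by move=> [_ P_ge0]; rewrite frob_dyadsum sumr_ge0 // => v _; apply: P_ge0. Qed.

Lemma psd_frob_dyadsum_eq0 P L y :
  psd P -> frob P (dyadsum L) = 0 -> y \in L -> qform P y = 0.
Proof.
move=> [_ P_ge0] /eqP; rewrite frob_dyadsum psumr_eq0 => [/allP Py0 yL|v _].
  exact/eqP/(Py0 y yL).
exact: P_ge0.
Qed.

Lemma psd_mulmx_eq0 P v : psd P -> qform P v = 0 -> P *m v = 0.
Proof.
move=> [P_sym P_ge0] Pv0; apply/matrixP => i j; rewrite (ord1 j) [RHS]mxE.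
pose e : 'cV[R]_n := delta_mx i 0.
have cross0 : bilform P v e + bilform P e v = 0.
  apply: (@lin_eq0_of_quad_ge0 _ _ (qform P e)) => t.
  have : 0 <= qform P (1 *: v + t *: e) := P_ge0 _.
  by rewrite qform_comb Pv0 expr1n !mul1r add0r.
have := cross0; rewrite (bilform_sym _ _ P_sym) -mulr2n -mulr_natr.
by move/eqP; rewrite mulf_eq0 pnatr_eq0 orbF bilform_deltal => /eqP.
Qed.

Lemma psd_diag_eq0 X : psd X -> (forall i, X i i = 0) -> X = 0.
Proof.
move=> X_psd X_diag0; apply/matrixP => i j; rewrite [RHS]mxE.
have /matrixP/(_ i 0) := psd_mulmx_eq0 X_psd (etrans (qform_delta X j) (X_diag0 j)).
by rewrite -colE !mxE.
Qed.

Lemma psd_schur_step X i : psd X -> 0 < X i i ->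
  exists c, psd (X - dyad c) /\ (X - dyad c) i i = 0.
Proof.
move=> [X_sym X_ge0] d_gt0; set d := X i i; set e : 'cV[R]_n := delta_mx i 0.
set c := (Num.sqrt d)^-1 *: (X *m e); exists c.
have qXe : qform X e = d by rewrite qform_delta.
have q_step x : qform (X - dyad c) x = qform X x - bilform X x e ^+ 2 / d.
  rewrite qformDl qformNl qform_dyad -scalemxAr mxE mulmxA.
  by rewrite exprMn exprVn sqr_sqrtr ?ltW // mulrC.
split; last first.
  rewrite -qform_delta -/e q_step -[bilform X e e]/(qform X e) qXe.
  by field; rewrite gt_eqF.
split=> [|x]; first by rewrite /symmat linearB /= dyad_tr X_sym.
change (0 <= qform (X - dyad c) x); rewrite q_step.
have : 0 <= qform X (1 *: x + (- bilform X x e / d) *: e) := X_ge0 _.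
rewrite qform_comb -(bilform_sym x e X_sym) qXe expr1n !mul1r.
suff -> : qform X x + - bilform X x e / d * (bilform X x e + bilform X x e)
          + (- bilform X x e / d) ^+ 2 * d = qform X x - bilform X x e ^+ 2 / d by [].
by field; rewrite gt_eqF.
Qed.

Lemma psd_dyadsum X : psd X -> exists L, X = dyadsum L.
Proof.
have [N] := ubnP #|[set i | X i i != 0]|; elim: N X => // N IH X /ltnSE card_X X_psd.
have [|diag0] := boolP [exists i, X i i != 0]; last first.
  exists [::]; rewrite /dyadsum big_nil; apply: psd_diag_eq0 => // i.
  by apply/eqP; move: diag0; rewrite negb_exists => /forallP/(_ i); rewrite negbK.
case/existsP => i Xii_neq0.
have Xii_gt0 : 0 < X i i by rewrite lt_def Xii_neq0 -qform_delta X_psd.2.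
have [c [X'_psd X'ii0]] := psd_schur_step X_psd Xii_gt0.
have diag_le j : (X - dyad c) j j <= X j j.
  by rewrite -!qform_delta qformDl qformNl qform_dyad gerDl oppr_le0 sqr_ge0.
have [L eL] : exists L, X - dyad c = dyadsum L.
  apply: (IH _ _ X'_psd); apply: leq_trans card_X; apply: proper_card; apply/properP; split.
    apply/subsetP => j; rewrite !inE; apply: contraNneq => Xjj0.
    by rewrite eq_le (le_trans (diag_le j)) ?Xjj0 // -qform_delta X'_psd.2.
  by exists i; rewrite !inE ?X'ii0 ?eqxx.
by exists (c :: L); rewrite dyadsum_cons -eL addrC subrK.
Qed.

Definition definite_pair A B := exists a b : R,
  [/\ 0 < a, 0 < b & psd (a *: A + b *: B) \/ psd (- (a *: A + b *: B))].

Lemma definite_pair_qform_ge0 A B L y : definite_pair A B ->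
  0 <= frob A (dyadsum L) -> 0 <= frob B (dyadsum L) ->
  y \in L -> qform A y = 0 -> 0 <= qform B y.
Proof.
move=> [a [b [a_gt0 b_gt0 [P_psd|NP_psd]]]] fA_ge0 fB_ge0 yL qAy0.
  have : 0 <= qform (a *: A + b *: B) y := P_psd.2 y.
  by rewrite qformDl !qformZl qAy0 mulr0 add0r pmulr_rge0.
have fNP0 : frob (- (a *: A + b *: B)) (dyadsum L) = 0.
  apply/eqP; rewrite eq_le psd_frob_dyadsum_ge0 // andbT frobNl frobDl !frobZl.
  by rewrite oppr_le0 addr_ge0 // mulr_ge0 // ltW.
have := psd_frob_dyadsum_eq0 NP_psd fNP0 yL.
rewrite qformNl qformDl !qformZl qAy0 mulr0 add0r => /eqP.
by rewrite oppr_eq0 mulf_eq0 (gt_eqF b_gt0) => /eqP ->.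
Qed.

Lemma psd_comb_cases A B a b : (a, b) != (0, 0) -> psd (a *: A + b *: B) ->
  [\/ definite_pair A B,
      (forall v, 0 <= qform A v -> 0 <= qform B v),
      (forall v, 0 <= qform B v -> 0 <= qform A v)
    | psd (- A) \/ psd (- B)].
Proof.
move=> ab_neq0 P_psd.
have qP v : 0 <= a * qform A v + b * qform B v.
  by rewrite -!qformZl -qformDl; apply: P_psd.2.
have [a_gt0|a_le0] := ltP 0 a; have [b_gt0|b_le0] := ltP 0 b.
- by apply: Or41; exists a, b; split; [| |left].
- apply: Or43 => v qBv; have := qP v.
  have : b * qform B v <= 0 by rewrite mulr_le0_ge0.
  by move=> bqB_le0 comb_ge0; rewrite -(pmulr_rge0 _ a_gt0); lra.
- apply: Or42 => v qAv; have := qP v.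
  have : a * qform A v <= 0 by rewrite mulr_le0_ge0.
  by move=> aqA_le0 comb_ge0; rewrite -(pmulr_rge0 _ b_gt0); lra.
move: a_le0 b_le0; rewrite !le_eqVlt => /predU1P[a0|a_lt0] /predU1P[b0|b_lt0].
- by move: ab_neq0; rewrite a0 b0 eqxx.
- apply/Or44/or_intror; have -> : - B = (- b^-1) *: (a *: A + b *: B).
    by rewrite a0 scale0r add0r scalerA mulNr mulVf ?lt_eqF // scaleN1r.
  by apply: psdZ P_psd; rewrite oppr_ge0 invr_le0 ltW.
- apply/Or44/or_introl; have -> : - A = (- a^-1) *: (a *: A + b *: B).
    by rewrite b0 scale0r addr0 scalerA mulNr mulVf ?lt_eqF // scaleN1r.
  by apply: psdZ P_psd; rewrite oppr_ge0 invr_le0 ltW.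
- apply: Or41; exists (- a), (- b); split; rewrite ?oppr_gt0 //; right.
  by rewrite !scaleNr -opprD opprK.
Qed.

End PSD.

Section Constraints.
Variables (R : realType) (n : nat) (I : finType) (M : I -> 'M[R]_n).
Implicit Types (J : {set I}) (X : 'M[R]_n) (v y : 'cV[R]_n) (L : seq 'cV[R]_n).

Definition admissible J v := [forall j in J, 0 <= qform (M j) v].

Definition feasible J X := forall j, j \in J -> 0 <= frob (M j) X.

Definition decomposable J X := exists2 L, dyadsum L = X & all (admissible J) L.

Lemma tight_decomposable J L a :
  a \in J -> (forall j, j \in J -> j != a -> definite_pair (M a) (M j)) ->
  feasible J (dyadsum L) -> frob (M a) (dyadsum L) = 0 ->
  decomposable J (dyadsum L).
Proof.
move=> aJ definite feas tight.
have [L' eL' iso] := isotropic_decomposition (etrans (esym (frob_dyadsum _ _)) tight).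
exists L' => //; apply/allP => y yL'; apply/forall_inP => j jJ.
have [->|j_neq_a] := eqVneq j a; first by rewrite iso.
apply: (definite_pair_qform_ge0 (definite j jJ j_neq_a) _ _ yL' (iso y yL')).
  by rewrite eL'; apply: feas.
by rewrite eL'; apply: feas.
Qed.

Lemma admissible_split J L :
  (forall i j, i \in J -> j \in J -> i != j -> definite_pair (M i) (M j)) ->
  feasible J (dyadsum L) -> ~~ all (admissible J) L ->
  exists y L1, [/\ dyadsum (y :: L1) = dyadsum L, (size L1 < size L)%N
                 & admissible J y].
Proof.
move=> definite feas /allPn [u uL /forall_inPn [a aJ]]; rewrite -ltNge => qAu.
have [w wL qAw] : exists2 w, w \in L & 0 < qform (M a) w.
  by apply: sum_ge0_has_gt0 uL qAu; rewrite -frob_dyadsum; apply: feas.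
have [y [L1 [eL1 size_L1 qAy]]] := isotropic_split uL wL qAu qAw.
exists y, L1; split=> //; apply/forall_inP => j jJ.
have [->|j_neq_a] := eqVneq j a; first by rewrite qAy.
apply: (definite_pair_qform_ge0 (definite a j aJ jJ _) _ _ (mem_head y L1) qAy).
- by rewrite eq_sym.
- by rewrite eL1; apply: feas.
- by rewrite eL1; apply: feas.
Qed.

Lemma definite_decomposable J L :
  (forall i j, i \in J -> j \in J -> i != j -> definite_pair (M i) (M j)) ->
  feasible J (dyadsum L) -> decomposable J (dyadsum L).
Proof.
move=> definite.
have [N] := ubnP (size L); elim: N L => // N IH L /ltnSE size_L feas.
have [adm|not_adm] := boolP (all (admissible J) L); first by exists L.
have [y [L1 [eL1 size_L1 y_adm]]] := admissible_split definite feas not_adm.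
have [fits|] := boolP [forall j in J, qform (M j) y <= frob (M j) (dyadsum L)].
  have [|L' eL' adm'] := IH L1 (leq_trans size_L1 size_L).
    move=> j jJ; move/forall_inP/(_ j jJ): fits.
    by rewrite -eL1 dyadsum_cons frobDr frob_dyad lerDl.
  exists (y :: L'); first by rewrite dyadsum_cons eL' -dyadsum_cons.
  by rewrite /= y_adm adm'.
case/forall_inPn => j0 j0J; rewrite -ltNge => too_big.
have [l [/andP [l_ge0 l_lt1] l_fits [j jJ tight]]] :=
  exists_critical_scaling (P := fun i => i \in J) (g := fun i => qform (M i) y)
    feas (ex_intro2 _ _ j0 j0J too_big).
set L2 := Num.sqrt (1 - l) *: y :: L1.
have eL2 : dyadsum L = l *: dyad y + dyadsum L2.
  rewrite dyadsum_cons dyadZ sqr_sqrtr ?subr_ge0 ?ltW // -eL1 dyadsum_cons.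
  by rewrite addrA -scalerDl addrCA subrr addr0 scale1r.
have frobL2 i : frob (M i) (dyadsum L2) = frob (M i) (dyadsum L) - l * qform (M i) y.
  by rewrite eL2 frobDr frobZr frob_dyad addrC addKr.
have [L' eL' adm'] : decomposable J (dyadsum L2).
  apply: (tight_decomposable jJ) => [i iJ i_neq_j|i iJ|].
  - by apply: definite; rewrite // eq_sym.
  - by rewrite (frobL2 i) subr_ge0 l_fits.
  - by rewrite (frobL2 j) tight subrr.
exists (Num.sqrt l *: y :: L'); first by rewrite dyadsum_cons eL' dyadZ sqr_sqrtr.
rewrite /= adm' andbT; apply/forall_inP => i iJ.
by rewrite qformZr mulr_ge0 ?sqr_ge0 // (forall_inP y_adm).
Qed.

Lemma pairwise_decomposable J L :
  (forall i j, i \in J -> j \in J -> i != j ->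
     exists a b : R, (a, b) != (0, 0) /\ psd (a *: M i + b *: M j)) ->
  feasible J (dyadsum L) -> decomposable J (dyadsum L).
Proof.
have [N] := ubnP #|J|; elim: N J => // N IH J /ltnSE card_J combs feas.
pose redundant d := (exists2 c, c \in J :\ d &
  forall v, 0 <= qform (M c) v -> 0 <= qform (M d) v) \/ psd (- M d).
have [[d [dJ d_red]]|no_red] := classic (exists d, d \in J /\ redundant d).
  have J'_sub : {subset J :\ d <= J} by move=> j /setD1P [].
  have [|||L' eL' adm'] := IH (J :\ d).
  - exact: leq_trans (proper_card (properD1 dJ)) card_J.
  - by move=> i j /J'_sub iJ /J'_sub jJ; apply: combs.
  - by move=> j /J'_sub; apply: feas.
  exists L' => //; apply/allP => v vL'; apply/forall_inP => j jJ.
  have adm_v := forall_inP (allP adm' v vL').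
  have [->|j_neq_d] := eqVneq j d; last by apply: adm_v; rewrite in_setD1 j_neq_d.
  case: d_red => [[c cJd implied]|nsd]; first exact/implied/adm_v.
  rewrite leNgt; apply/negP => qdv_lt0.
  have [|w _] := sum_ge0_has_gt0 _ vL' qdv_lt0.
    by rewrite -frob_dyadsum eL'; apply: feas.
  have : 0 <= qform (- M d) w := nsd.2 w.
  by rewrite qformNl oppr_ge0 leNgt => /negP.
apply: definite_decomposable feas => i j iJ jJ ij.
have [a [b [ab_neq0 P_psd]]] := combs i j iJ jJ ij.
case: (psd_comb_cases ab_neq0 P_psd) => [//|impl|impl|[nsd|nsd]]; exfalso; apply: no_red.
- by exists j; split=> //; left; exists i; rewrite // in_setD1 ij.
- by exists i; split=> //; left; exists j; rewrite // in_setD1 eq_sym ij.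
- by exists i; split=> //; right.
- by exists j; split=> //; right.
Qed.

End Constraints.

Lemma conv_dyadsum (R : realType) (n : nat) (S : 'M[R]_n -> Prop) L :
  S 0 -> (forall c X, 0 <= c -> S X -> S (c *: X)) ->
  (forall v, v \in L -> S (dyad v)) ->
  conv (fun Y => S Y /\ rank_one_psd Y) (dyadsum L).
Proof.
(* The zero vector is prepended so that the combination is nonempty even when L is. *)
move=> S0 SZ SL; set L0 := 0 :: L; set m := size L0.
have m_gt0 : 0 < m%:R :> R by rewrite ltr0n.
have dyad_nth i : m%:R^-1 *: dyad (Num.sqrt m%:R *: nth 0 L0 i) = dyad (nth 0 L0 i).
  by rewrite dyadZ sqr_sqrtr ?ltW // scalerA mulVf ?gt_eqF ?scale1r.
exists m, (fun _ => m%:R^-1), (fun i => dyad (Num.sqrt m%:R *: nth 0 L0 i)).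
split; [|split; [|split]].
- by move=> _; rewrite invr_ge0 ltW.
- by rewrite sumr_const card_ord -[_ *+ _]mulr_natr mulVf ?gt_eqF.
- move=> i; split; last by exists (Num.sqrt m%:R *: nth 0 L0 i).
  rewrite dyadZ sqr_sqrtr ?ltW //; apply: SZ; first exact: ltW.
  have : nth 0 L0 i \in L0 by apply: mem_nth.
  by rewrite inE => /predU1P [->|/SL //]; rewrite /dyad mul0mx.
- have -> : dyadsum L = dyadsum L0 by rewrite dyadsum_cons /dyad mul0mx add0r.
  by rewrite /dyadsum (big_nth 0) big_mkord; apply: eq_bigr => i _; rewrite dyad_nth.
Qed.

Section SpectrahedralCone.
Variables (R : realType) (n k : nat) (M : 'I_k -> 'M[R]_n).

Lemma SM0 : SM M 0.
Proof. by split=> [|i]; [exact: psd0 | rewrite frob0r]. Qed.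

Lemma SMD X Y : SM M X -> SM M Y -> SM M (X + Y).
Proof.
move=> [X_psd X_feas] [Y_psd Y_feas]; split=> [|i]; first exact: psdD.
by rewrite frobDr addr_ge0.
Qed.

Lemma SMZ c X : 0 <= c -> SM M X -> SM M (c *: X).
Proof.
move=> c_ge0 [X_psd X_feas]; split=> [|i]; first exact: psdZ.
by rewrite frobZr mulr_ge0.
Qed.

Lemma SM_dyad v : admissible M [set: 'I_k] v -> SM M (dyad v).
Proof.
move=> /forall_inP v_adm; split=> [|i]; first exact: psd_dyad.
by rewrite frob_dyad v_adm ?in_setT.
Qed.

Lemma conv_SM X : conv (fun Y => SM M Y /\ rank_one_psd Y) X -> SM M X.
Proof.
move=> [m [w [A [w_ge0 [_ [A_SM ->]]]]]].
apply: (big_ind (SM M)) => [|Y Z|i _]; [exact: SM0 | exact: SMD |].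
by apply: SMZ; [apply: w_ge0 | case: (A_SM i)].
Qed.

End SpectrahedralCone.

Theorem proposition3p3 (R : realType) (n k : nat) (M : 'I_k -> 'M[R]_n)
  (hk : (2 <= k)%N)
  (hsym : forall i, symmat (M i))
  (hpair : forall i j : 'I_k, i != j ->
     exists a b : R, (a, b) != (0, 0) /\ psd (a *: M i + b *: M j)) :
  ROG (SM M).
Proof.
move=> X; split; last exact: conv_SM.
case=> X_psd X_feas; have [L eL] := psd_dyadsum X_psd; subst X.
have [L' <- adm] : decomposable M [set: 'I_k] (dyadsum L).
  by apply: pairwise_decomposable => [i j _ _|j _]; [apply: hpair | apply: X_feas].
apply: conv_dyadsum => [|c Y|v vL']; [exact: SM0 | exact: SMZ |].
exact/SM_dyad/(allP adm).
Qed.
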